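(* Consider three agents $[3]=\{1,2,3\}$ and the twelve items $\mathcal{M}=\{(j,k): j\in\{1,2,3\},k\in\{1,2,3,4\}\}$. Let $$B=\begin{pmatrix}1&1&1&1\\1&1&1&1\\1&1&1&1\end{pmatrix},\ O=\begin{pmatrix}17&25&12&1\\2&22&3&28\\11&0&21&23\end{pmatrix},\ E^1=\begin{pmatrix}-3&1&1&1\\0&0&0&0\\0&0&0&0\end{pmatrix},$$ $$E^2=\begin{pmatrix}-3&1&0&0\\1&0&0&0\\1&0&0&0\end{pmatrix},\ E^3=\begin{pmatrix}-3&0&1&0\\0&0&1&0\\0&0&0&1\end{pmatrix},$$ and for $i\in[3]$ let $u_i$ be the additive function with $u_i((j,k))=10^6 B_{jk}+10^3 O_{jk}+E^i_{jk}$. Let $d_i=-u_i$. Then there is no allocation $(S_1,S_2,S_3)\in\Pi_3(\mathcal{M})$ with $d_i(S_i)\ge MmS_{d_i}^3(\mathcal{M})$ for all $i\in[3]$. In particular, an MmS allocation for chores need not exist.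
   Context: $\Pi_3(\mathcal{M})$ is the set of ordered 3-partitions of $\mathcal{M}$ (parts may be empty). For an additive function $v$ on subsets of $\mathcal{M}$, $MmS_{v}^N(\mathcal{M}):=\max_{(S_1,\ldots,S_N)\in\Pi_N(\mathcal{M})}\min_{j} v(S_j)$. An MmS allocation for an instance with utilities $(v_i)$ is an allocation with $v_i(S_i)\ge MmS_{v_i}^N(\mathcal{M})$ for all agents $i$. *)

From HB Require Import structures.
From mathcomp Require Import all_boot all_order all_algebra.
Set Implicit Arguments. Unset Strict Implicit. Unset Printing Implicit Defensive.
Import Order.TTheory GRing.Theory Num.Theory.
Local Open Scope ring_scope.

(* Items: pairs (j,k), j in {1,2,3} (encoded 'I_3), k in {1,..,4} (encoded 'I_4). *)
Definition item := ('I_3 * 'I_4)%type.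

Definition addv (w : item -> int) (S : {set item}) : int := \sum_(x in S) w x.

(* Ordered N-partitions of the item set (parts may be empty): an item-to-part map. *)
Definition part (N : nat) (P : {ffun item -> 'I_N}) (j : 'I_N) : {set item} :=
  [set x | P x == j].

(* min_j v(S_j) for an ordered N-partition, N >= 1 (parts indexed by 'I_N.-1.+1,
   which is 'I_N for N >= 1; for N = 3 it is convertible to 'I_3). *)
Definition minpart (N : nat) (v : {set item} -> int) (P : {ffun item -> 'I_N.-1.+1}) : int :=
  \big[Num.min/v (part P ord0)]_(j < N.-1.+1) v (part P j).

(* The max over the (nonempty) finite set of partitions is seeded with the
   value of one of its elements; max is idempotent so this is the true max. *)
Definition MmS (N : nat) (v : {set item} -> int) : int :=
  \big[Num.max/@minpart N v [ffun _ => ord0]]_(P : {ffun item -> 'I_N.-1.+1}) @minpart N v P.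

(* Matrices, row j, column k (0-indexed). *)
Definition mat (rows : seq (seq int)) (j : 'I_3) (k : 'I_4) : int :=
  nth 0 (nth [::] rows j) k.

Definition Bm := mat [:: [:: 1; 1; 1; 1]; [:: 1; 1; 1; 1]; [:: 1; 1; 1; 1]].
Definition Om := mat [:: [:: 17; 25; 12; 1]; [:: 2; 22; 3; 28]; [:: 11; 0; 21; 23]].
Definition E1 := mat [:: [:: -3; 1; 1; 1]; [:: 0; 0; 0; 0]; [:: 0; 0; 0; 0]].
Definition E2 := mat [:: [:: -3; 1; 0; 0]; [:: 1; 0; 0; 0]; [:: 1; 0; 0; 0]].
Definition E3 := mat [:: [:: -3; 0; 1; 0]; [:: 0; 0; 1; 0]; [:: 0; 0; 0; 1]].

(* Agent i (0-indexed: 0,1,2 stand for agents 1,2,3). *)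
Definition Em (i : 'I_3) : 'I_3 -> 'I_4 -> int :=
  match val i with 0%N => E1 | 1%N => E2 | _ => E3 end.

Definition uval (i : 'I_3) (x : item) : int :=
  10 ^+ 6 * Bm x.1 x.2 + 10 ^+ 3 * Om x.1 x.2 + Em i x.1 x.2.

Definition u (i : 'I_3) : {set item} -> int := addv (uval i).

Definition d (i : 'I_3) : {set item} -> int := fun S => - u i S.

From HB Require Import structures.
From mathcomp Require Import all_boot all_order all_algebra.
From mathcomp Require Import zify.
Set Implicit Arguments. Unset Strict Implicit. Unset Printing Implicit Defensive.
Import Order.TTheory GRing.Theory Num.Theory.
Local Open Scope ring_scope.

(* Every item is worth about 10^6 to every agent, so the value of a bundle is
   dominated by its size, refined by the O-term, with the E-terms breaking
   ties. Each agent i partitions the items into three bundles of four items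
   with O-sum 55 and E_i-sum at most 0, so MmS(d_i) >= -(4*10^6 + 55*10^3).
   An allocation meeting all three shares must then give each agent four items
   of O-sum 55 (sizes add up to 12 and O-sums to 165) and nonpositive E_i-sum,
   and enumerating the 4-item bundles shows that no three such bundles, one for
   each agent, are pairwise disjoint. *)

Lemma MmS_ge_witness N (v : {set item} -> int) (P : {ffun item -> 'I_N.-1.+1}) c :
  (forall j, c <= v (part P j)) -> c <= MmS N v.
Proof.
move=> hP; apply: (@le_trans _ _ (minpart v P)).
  by rewrite /minpart; elim/big_ind: _ => // x y hx hy; rewrite le_min hx hy.
by rewrite /MmS (bigD1 P) //= le_max lexx.
Qed.

Lemma big_parts R (idx : R) (op : Monoid.com_law idx) N
    (P : {ffun item -> 'I_N}) (F : item -> R) :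
  \big[op/idx]_j \big[op/idx]_(x in part P j) F x = \big[op/idx]_x F x.
Proof.
rewrite (partition_big P predT) //=; apply: eq_bigr => j _.
by apply: eq_bigl => x; rewrite inE.
Qed.

Lemma eq_of_sum_le_const (I : finType) (R : numDomainType) (F : I -> R) c :
  (forall i, F i <= c) -> \sum_i F i = c *+ #|I| -> forall i, F i = c.
Proof.
move=> leFc sumF.
have : \sum_i (c - F i) = 0 by rewrite sumrB sumr_const sumF subrr.
have ge0 i : 0 <= c - F i by rewrite subr_ge0.
move/(psumr_eq0P (fun i _ => ge0 i)) => eq0 i.
by apply/eqP; rewrite eq_sym -subr_eq0 eq0.
Qed.

Lemma sum_min0_le (I : finType) (R : realDomainType) (P : pred I) (F : I -> R) :
  \sum_i Num.min 0 (F i) <= \sum_(i | P i) F i.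
Proof.
rewrite [leRHS]big_mkcond /=; apply: ler_sum => i _.
by case: (P i); rewrite ge_min lexx ?orbT.
Qed.

Fixpoint sublists (T : Type) (s : seq T) : seq (seq T) :=
  if s is x :: s' then [seq x :: t | t <- sublists s'] ++ sublists s' else [:: [::]].

Lemma filter_in_sublists (T : eqType) (p : pred T) (s : seq T) :
  filter p s \in sublists s.
Proof.
elim: s => //= x s IH; rewrite mem_cat.
by case: (p x); rewrite ?(map_f _ IH) ?IH ?orbT.
Qed.

(* An explicit enumeration of the items, since [Finite.enum] does not reduce
   under [vm_compute]. *)
Definition items : seq item :=
  [seq (j, k) | j <- [:: @Ordinal 3 0 isT; @Ordinal 3 1 isT; @Ordinal 3 2 isT],
                k <- [:: @Ordinal 4 0 isT; @Ordinal 4 1 isT; @Ordinal 4 2 isT;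
                         @Ordinal 4 3 isT]].

Lemma mem_items x : x \in items.
Proof. by case: x => [[[|[|[|j]]] hj] [[|[|[|[|k]]]] hk]]. Qed.

Lemma uniq_items : uniq items.
Proof. by []. Qed.

Lemma sum_items (R : nmodType) (F : item -> R) : \sum_x F x = \sum_(x <- items) F x.
Proof.
apply: perm_big; apply: uniq_perm; rewrite ?index_enum_uniq ?uniq_items //.
by move=> x; rewrite mem_index_enum mem_items.
Qed.

Definition block N (g : item -> 'I_N) (j : 'I_N) : seq item :=
  [seq x <- items | g x == j].

Lemma perm_enum_part N (P : {ffun item -> 'I_N}) j :
  perm_eq (enum (part P j)) (block P j).
Proof.
apply: uniq_perm; rewrite ?enum_uniq ?filter_uniq ?uniq_items //.
by move=> x; rewrite mem_enum mem_filter inE mem_items andbT.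
Qed.

Lemma card_part N (P : {ffun item -> 'I_N}) j : #|part P j| = size (block P j).
Proof. by rewrite cardE (perm_size (perm_enum_part P j)). Qed.

Lemma addv_part N (P : {ffun item -> 'I_N}) j f :
  addv f (part P j) = \sum_(x <- block P j) f x.
Proof. by rewrite /addv -big_enum (perm_big _ (perm_enum_part P j)). Qed.

Lemma disjoint_blocks N (g : item -> 'I_N) j k :
  j != k -> ~~ has (mem (block g k)) (block g j).
Proof.
move=> neq_jk; apply/hasPn => x; rewrite mem_filter => /andP[/eqP gx _].
by rewrite inE mem_filter gx (negbTE neq_jk).
Qed.

Definition Ow (x : item) : int := Om x.1 x.2.
Definition Ew (i : 'I_3) (x : item) : int := Em i x.1 x.2.

Definition balanced_u : int := 10 ^+ 6 * 4 + 10 ^+ 3 * 55.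

Lemma u_split i S :
  u i S = 10 ^+ 6 * #|S|%:R + 10 ^+ 3 * addv Ow S + addv (Ew i) S.
Proof.
have B1 x : Bm x.1 x.2 = 1 by case: x => [[[|[|[|j]]] hj] [[|[|[|[|k]]]] hk]].
rewrite /u /addv /uval -sumr_const !mulr_sumr -!big_split /=.
by apply: eq_bigr => x _; rewrite B1.
Qed.

Lemma addv_Ow_ge0 S : 0 <= addv Ow S.
Proof.
by apply: sumr_ge0 => -[[[|[|[|j]]] hj] [[|[|[|[|k]]]] hk]].
Qed.

Lemma addv_Ew_ge i S : -3 <= addv (Ew i) S.
Proof.
apply: le_trans (sum_min0_le _ _); rewrite sum_items unlock.
by case: i => [[|[|[|i]]] hi]; vm_compute.
Qed.

Definition balanced (i : 'I_3) (s : seq item) :=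
  [&& size s == 4%N, \sum_(x <- s) Ow x == 55 & \sum_(x <- s) Ew i x <= 0].

Lemma balanced_part i (P : {ffun item -> 'I_3}) j :
  balanced i (block P j) =
  [&& #|part P j| == 4%N, addv Ow (part P j) == 55 & addv (Ew i) (part P j) <= 0].
Proof. by rewrite /balanced card_part !addv_part. Qed.

Lemma u_balanced_le i (P : {ffun item -> 'I_3}) j :
  balanced i (block P j) -> u i (part P j) <= balanced_u.
Proof.
rewrite balanced_part u_split => /and3P[/eqP-> /eqP-> le0].
by rewrite natz -[leRHS]addr0 lerD2l.
Qed.

(* The bundle of each item, listed in the order of [items]: agent 1 splits the
   items by rows, agents 2 and 3 by the other two partitions into bundles of
   O-sum 55. *)
Definition witness_labels (i : 'I_3) : seq nat :=
  match val i with
  | 0%N => [:: 0; 0; 0; 0; 1; 1; 1; 1; 2; 2; 2; 2]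
  | 1%N => [:: 0; 0; 1; 2; 0; 1; 2; 2; 0; 1; 1; 2]
  | _ => [:: 0; 1; 0; 2; 1; 2; 0; 1; 2; 1; 2; 0]
  end%N.

Definition witness (i : 'I_3) (x : item) : 'I_3 :=
  inZp (nth 0%N (witness_labels i) (index x items)).

Lemma block_finfun N (g : item -> 'I_N) j : block [ffun x => g x] j = block g j.
Proof. by apply: eq_filter => x; rewrite ffunE. Qed.

Lemma balanced_witness i j : balanced i (block (witness i) j).
Proof.
rewrite /balanced unlock.
by case: i j => [[|[|[|i]]] hi] [[|[|[|j]]] hj]; vm_compute.
Qed.

Lemma MmS_d_ge i : - balanced_u <= MmS 3 (d i).
Proof.
apply: (@MmS_ge_witness 3 (d i) [ffun x => witness i x]) => j.
by rewrite lerN2 u_balanced_le // block_finfun balanced_witness.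
Qed.

Lemma balanced_shares (n o e : 'I_3 -> int) :
  \sum_j n j = 12 -> \sum_j o j = 165 ->
  (forall j, 0 <= o j) -> (forall j, -3 <= e j) ->
  (forall j, 10 ^+ 6 * n j + 10 ^+ 3 * o j + e j <= balanced_u) ->
  forall j, [/\ n j = 4, o j = 55 & e j <= 0].
Proof.
rewrite /balanced_u => sum_n sum_o o_ge0 e_ge le_u.
have n4 : forall j, n j = 4.
  apply: eq_of_sum_le_const; last by rewrite card_ord sum_n.
  by move=> j; have := le_u j; have := o_ge0 j; have := e_ge j; lia.
have o55 : forall j, o j = 55.
  apply: eq_of_sum_le_const; last by rewrite card_ord sum_o.
  by move=> j; have := le_u j; have := e_ge j; rewrite n4; lia.
by move=> j; split => //; have := le_u j; rewrite n4 o55; lia.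
Qed.

Lemma sum_card_parts N (P : {ffun item -> 'I_N}) :
  \sum_j (#|part P j|%:R : int) = 12.
Proof.
under eq_bigr do rewrite -sumr_const.
by rewrite big_parts sumr_const card_prod !card_ord.
Qed.

Lemma sum_Ow_parts N (P : {ffun item -> 'I_N}) : \sum_j addv Ow (part P j) = 165.
Proof. by rewrite (big_parts _ _ Ow) sum_items unlock. Qed.

Definition candidates (i : 'I_3) := [seq s <- sublists items | balanced i s].

Lemma blocks_candidates (A : {ffun item -> 'I_3}) :
  (forall i, u i (part A i) <= balanced_u) -> forall i, block A i \in candidates i.
Proof.
move=> le_u i.
have le_split j : 10 ^+ 6 * #|part A j|%:R + 10 ^+ 3 * addv Ow (part A j)
                  + addv (Ew j) (part A j) <= balanced_u by rewrite -u_split.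
have [card4 O55 E_le0] := balanced_shares (sum_card_parts A) (sum_Ow_parts A)
  (fun j => addv_Ow_ge0 _) (fun j => addv_Ew_ge j _) le_split i.
rewrite mem_filter filter_in_sublists balanced_part O55 E_le0 eqxx !andbT.
lia.
Qed.

Definition disjoint3 (s0 s1 s2 : seq item) :=
  [&& ~~ has (mem s1) s0, ~~ has (mem s2) s0 & ~~ has (mem s2) s1].

(* Taking the candidate lists as arguments makes [vm_compute] evaluate each of
   them only once. *)
Definition overlapping (c0 c1 c2 : seq (seq item)) :=
  allrel (fun s0 s1 => all (fun s2 => ~~ disjoint3 s0 s1 s2) c2) c0 c1.

Lemma candidates_overlap s0 s1 s2 :
  s0 \in candidates 0 -> s1 \in candidates 1 -> s2 \in candidates 2 ->
  ~~ disjoint3 s0 s1 s2.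
Proof.
have : overlapping (candidates 0) (candidates 1) (candidates 2).
  by rewrite /candidates /balanced unlock; vm_compute.
by move=> /allrelP overlap /overlap /[apply] /allP; apply.
Qed.

Theorem proposition3 :
  ~ exists A : {ffun item -> 'I_3},
      forall i : 'I_3, MmS 3 (d i) <= d i (part A i).
Proof.
case=> A hA.
have le_u i : u i (part A i) <= balanced_u.
  by rewrite -lerN2; apply: le_trans (MmS_d_ge i) (hA i).
have cand := blocks_candidates le_u.
case/negP: (candidates_overlap (cand 0) (cand 1) (cand 2)).
by apply/and3P; split; apply: disjoint_blocks.
Qed.
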